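(* Let $G$ be a connected graph with $N$ vertices and maximum degree $\Delta$, let $R$ be a positive integer, and assume $N>\Delta^{4R}+1$. Let $H$ be an operator (not necessarily Hermitian) on the qubits at the vertices of $G$ that has range at most $R$ and satisfies $H|W\rangle=\lambda|W\rangle$ for some $\lambda\in\mathbb{C}$. Then there exist constants $\Omega,\omega\in\mathbb{C}$ and operators $h_X$, indexed by subsets $X$ of vertices with $\mathrm{diam}(X)\le 2R$, each supported in $X$ and satisfying $h_X|W\rangle=h_X|\overline 0\rangle=0$, such that $$H=\Omega I+\omega\sum_i s_i^\dagger s_i+\sum_{X:\mathrm{diam}(X)\le 2R}h_X .$$
   Context: System of $N$ qubits on the vertices of a graph $G$ with local basis $|0\rangle,|1\rangle$. For each vertex $i$, $s_i^\dagger$ acts on $i$ as $s^\dagger|0\rangle=|1\rangle$, $s^\dagger|1\rangle=0$, $s_i=(s_i^\dagger)^\dagger$; $|\overline 0\rangle=|0\rangle^{\otimes N}$. Distances $|\mathbf r_i-\mathbf r_j|$ are graph distances. Every operator has a unique expansion in normal-ordered strings $s^\dagger_{j_1}\cdots s^\dagger_{j_n}s_{k_1}\cdots s_{k_m}$ (the $j$'s pairwise distinct, the $k$'s pairwise distinct, overlaps allowed; the empty string is $I$), whose sites are $\{j_1,\dots,j_n,k_1,\dots,k_m\}$. A string has range $R$, where $R$ is the smallest positive integer with all pairwise distances between its sites $<R$; an operator has range at most $R$ if every string with nonzero coefficient has range at most $R$. For a vertex set $X$, $\mathrm{diam}(X)=1+\max_{i,j\in X}|\mathbf r_i-\mathbf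 r_j|$. An operator is supported in $X$ if it acts as the identity outside $X$. $|W\rangle=N^{-1/2}\sum_i s_i^\dagger|\overline 0\rangle$. *)

From HB Require Import structures.
From mathcomp Require Import all_boot all_order all_algebra.
From mathcomp Require Import reals.
From mathcomp Require Import complex.
Set Implicit Arguments. Unset Strict Implicit. Unset Printing Implicit Defensive.
Import Order.TTheory GRing.Theory Num.Theory.
Local Open Scope ring_scope.

Section QubitGraph.
Variable R : realType.
Notation C := (R[i]).
Variable V : finType.
Variable e : rel V.

Fixpoint reach (n : nat) (i j : V) : bool :=
  if n is n'.+1 then reach n' i j || [exists k, reach n' i k && e k j]
  else i == j.

(* graph distance (for a connected graph every distance is < #|V|) *)
Definition dist (i j : V) : nat := find (fun n => reach n i j) (iota 0 #|V|).

Definition maxdeg : nat := \max_(i : V) #|[set j | e i j]|.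

Definition diam (X : {set V}) : nat := (\max_(i in X) \max_(j in X) dist i j).+1.

(* range of a string with site set S: smallest positive integer R with
   all pairwise distances < R, i.e. 1 + max distance (1 if S is empty) *)
Definition srange (S : {set V}) : nat := (\max_(i in S) \max_(j in S) dist i j).+1.

Definition state := {ffun V -> bool}.
Definition dimH := #|{: state}|.
Definition op := 'M[C]_dimH.
Definition vec := 'cV[C]_dimH.

Definition mkop (f : state -> state -> C) : op :=
  \matrix_(a, b) f (enum_val a) (enum_val b).
Definition mkvec (f : state -> C) : vec := \col_a f (enum_val a).

(* s_i^dagger |0>=|1>, s_i^dagger |1> = 0 on site i *)
Definition sdag (i : V) : op :=
  mkop (fun x y => if ~~ y i && (x == [ffun v => if v == i then true else y v])
                   then 1 else 0).
Definition sop (i : V) : op := map_mx (fun z => z^*) (sdag i)^T.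

(* normal-ordered string  s^dag_{j1}..s^dag_{jn} s_{k1}..s_{km}  with
   {j1..jn} = J, {k1..km} = K *)
Definition nstring (J K : {set V}) : op :=
  foldr mulmx 1%:M ([seq sdag j | j <- enum J] ++ [seq sop k | k <- enum K]).

(* H has range at most Rr: in its (unique) normal-ordered expansion every
   string with nonzero coefficient has range at most Rr *)
Definition range_le (Rr : nat) (H : op) : Prop :=
  exists c : {set V} -> {set V} -> C,
    H = \sum_(J : {set V}) \sum_(K : {set V}) c J K *: nstring J K /\
    forall J K, c J K != 0 -> (srange (J :|: K) <= Rr)%N.

(* supported in X: H = A (x) I_{outside X} *)
Definition local (X : {set V}) := {ffun {v : V | v \in X} -> bool}.
Definition restr (X : {set V}) (x : state) : local X := [ffun v => x (val v)].
Definition supported (X : {set V}) (H : op) : Prop :=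
  exists A : local X -> local X -> C,
    H = mkop (fun x y => A (restr X x) (restr X y) *
                         \prod_(v in ~: X) (x v == y v)%:R).

Definition vac : vec := mkvec (fun y => (y == [ffun _ => false])%:R).
Definition Wst : vec :=
  mkvec (fun y => if #|[set v | y v]| == 1%N then (sqrtC (#|V|%:R))^-1 else 0).

Definition numop : op := \sum_(i : V) sdag i *m sop i.

End QubitGraph.

(* Expand H in normal-ordered strings, H = sum_{J,K} c(J,K) s_J^dag s_K.  On
   the one-particle sector only the strings with |K| <= 1 survive, and the
   coefficient of a basis state |S> in H|W> = lam |W> gives
     sum_{i in S} c(S\i, {}) + sum_i c(S, {i}) = lam [|S| = 1].
   Since N > Delta^(4R) + 1, balls of radius 2R - 1 around two sites never
   cover the graph, so there is a third site far from both.  Using S = {a, b}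
   for three pairwise far sites, and S = {b} u J for b far from J, gives
   c(J, {}) = 0 for every J <> {}; then sum_i c(J, {i}) = om [|J| = 1] with
   om = lam - c({}, {}).  What remains of H - c({}, {}) - om sum_i s_i^dag s_i
   is a sum of strings with |K| >= 2, which kill |W> and |0>, of differences
   c(J, {i}) (s_J^dag s_i - s_J^dag s_a) with a in J fixed, and, for J = {}, of
   differences s_i - s_r that telescope along a path into nearest-neighbour
   terms s_v - s_u; each of these is supported on a set of diameter <= 2R. *)

From HB Require Import structures.
From mathcomp Require Import all_boot all_order all_algebra.
From mathcomp Require Import reals.
From mathcomp Require Import complex.
From mathcomp Require Import zify.
Set Implicit Arguments. Unset Strict Implicit. Unset Printing Implicit Defensive.

Section Graph.
Variables (V : finType) (e : rel V).

Lemma reachS n i j : reach e n i j -> reach e n.+1 i j.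
Proof. by move=> h /=; rewrite h. Qed.

Lemma reach_le m n i j : (m <= n)%N -> reach e m i j -> reach e n i j.
Proof.
move=> mn; rewrite -(subnKC mn); elim: (n - m)%N => [|k IH]; first by rewrite addn0.
by move=> h; rewrite addnS; apply/reachS/IH.
Qed.

Lemma reach0 n i : reach e n i i.
Proof. by apply: (@reach_le 0) => //=. Qed.

Lemma reach_trans m n i j k :
  reach e m i j -> reach e n j k -> reach e (m + n) i k.
Proof.
move=> hij; elim: n k => [|n IH] k /=; first by move/eqP=> <-; rewrite addn0.
rewrite addnS /= => /orP [h|/existsP [l /andP [h el]]]; first by rewrite IH.
by apply/orP; right; apply/existsP; exists l; rewrite IH.
Qed.

Lemma reach_edge i j : e i j -> reach e 1 i j.
Proof. by move=> h /=; apply/orP; right; apply/existsP; exists i; rewrite eqxx. Qed.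

Lemma connect_reach i j : connect e i j -> exists n, reach e n i j.
Proof.
case/connectP=> p; elim: p i => [|k p IH] i /=.
  by move=> _ ->; exists 0%N; rewrite /= eqxx.
case/andP=> eik pk lj; have [n hn] := IH _ pk lj.
by exists n.+1; rewrite -add1n; exact: reach_trans (reach_edge eik) hn.
Qed.

Lemma dist_le_reach n i j : reach e n i j -> (dist e i j <= n)%N.
Proof.
move=> h; rewrite /dist; case: (ltnP n #|V|) => nV; last first.
  by apply: leq_trans (find_size _ _) _; rewrite size_iota.
by rewrite leqNgt; apply/negP => /(before_find 0); rewrite nth_iota // add0n h.
Qed.

Lemma reach_dist n i j : (dist e i j <= n)%N -> (n < #|V|)%N -> reach e n i j.
Proof.
move=> dn nV; have hs : has (fun n => reach e n i j) (iota 0 #|V|).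
  by rewrite has_find size_iota (leq_ltn_trans dn nV).
apply: reach_le dn _; have := nth_find 0 hs; rewrite nth_iota ?add0n //.
by move: hs; rewrite has_find size_iota.
Qed.

Lemma diam_le_reach (X : {set V}) n :
  (forall u v, u \in X -> v \in X -> reach e n u v) -> (diam e X <= n.+1)%N.
Proof.
move=> h; rewrite /diam ltnS; apply/bigmax_leqP=> u uX; apply/bigmax_leqP=> v vX.
exact: dist_le_reach (h _ _ uX vX).
Qed.

Lemma reach_srange (S : {set V}) n u v : (srange e S <= n.+1)%N -> (n < #|V|)%N ->
  u \in S -> v \in S -> reach e n u v.
Proof.
rewrite /srange ltnS => /bigmax_leqP hS nV uS vS; apply: reach_dist nV.
by move/bigmax_leqP: (hS u uS); apply.
Qed.

Definition ball a n := [set v | reach e n a v].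

Lemma card_adj_le_maxdeg k : (#|[set j | e k j]| <= maxdeg e)%N.
Proof. exact: (@leq_bigmax _ (fun i => #|[set j | e i j]|) k). Qed.

Lemma card_bigcup_le (I : finType) (P : pred I) (F : I -> {set V}) :
  (#|\bigcup_(i | P i) F i| <= \sum_(i | P i) #|F i|)%N.
Proof.
elim/big_rec2: _ => [|i n A _ IH]; first by rewrite cards0.
by apply: leq_trans (leq_card_setU _ _) _; rewrite leq_add2l.
Qed.

Lemma card_ball a n : (#|ball a n| <= (maxdeg e).+1 ^ n)%N.
Proof.
elim: n => [|n IH].
  by rewrite (_ : ball a 0 = [set a]) ?cards1 //; apply/setP=> v; rewrite !inE eq_sym.
have sub : ball a n.+1 \subset \bigcup_(k in ball a n) (k |: [set j | e k j]).
  apply/subsetP=> v; rewrite inE /= => /orP [h|/existsP [k /andP [h ekv]]].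
    by apply/bigcupP; exists v; rewrite ?inE ?eqxx.
  by apply/bigcupP; exists k; rewrite !inE ?ekv ?orbT.
apply: leq_trans (subset_leq_card sub) (leq_trans (card_bigcup_le _ _) _).
rewrite expnSr; apply: leq_trans (_ : \sum_(k in ball a n) (maxdeg e).+1 <= _)%N.
  apply: leq_sum => k _; rewrite cardsU1 -add1n.
  exact: leq_add (leq_b1 _) (card_adj_le_maxdeg k).
by rewrite sum_nat_const leq_mul2r IH orbT.
Qed.

Lemma exists_far m : (2 * (maxdeg e).+1 ^ m < #|V|)%N ->
  forall a b, exists d, ~~ reach e m a d /\ ~~ reach e m b d.
Proof.
move=> NV a b; suff : ~~ ([set: V] \subset ball a m :|: ball b m).
  by case/subsetPn=> d _; rewrite !inE negb_or => /andP hd; exists d.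
apply/negP=> /subset_leq_card; rewrite cardsT => h.
have := leq_add (card_ball a m) (card_ball b m).
move/(leq_trans (leq_card_setU (ball a m) (ball b m)))/(leq_trans h).
by rewrite addnn -mul2n leqNgt NV.
Qed.

Hypothesis e_sym : symmetric e.
Hypothesis e_conn : forall i j : V, connect e i j.

(* A neighbour of [a] has no neighbour other than [a], so the ball of radius
   one around [a] is closed under [e] and, by connectivity, is everything. *)
Lemma card_le_maxdegS : (maxdeg e <= 1)%N -> (#|V| <= (maxdeg e).+1)%N.
Proof.
move=> D1; case: (posnP #|V|) => [->|/card_gt0P [a _]] //.
have cl : closed e (ball a 1).
  apply: intro_closed; first exact: sym_connect_sym.
  move=> x y exy; rewrite !inE /= => /orP [/eqP ->|]; first exact: reach_edge.
  case/existsP=> k /andP [/eqP ak eax]; subst k; apply/orP; left; apply/eqP/esym/eqP.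
  apply: contraT => ya; have : (#|[set a; y]| <= #|[set j | e x j]|)%N.
    by apply/subset_leq_card/subsetP=> w; rewrite !inE => /orP [] /eqP ->; rewrite // e_sym.
  by rewrite cards2 eq_sym ya; move/leq_trans/(_ (leq_trans (card_adj_le_maxdeg x) D1)).
rewrite -(expn1 (maxdeg e).+1); apply: leq_trans (card_ball a 1).
rewrite -cardsT; apply/subset_leq_card/subsetP=> v _.
by rewrite -(closed_connect cl (e_conn a v)) inE reach0.
Qed.

End Graph.

Import Order.TTheory GRing.Theory Num.Theory.
Local Open Scope ring_scope.

Section BasisOperators.
Variables (R : realType) (V : finType).
Notation C := (R[i]).
Notation op := (op R V).
Notation vec := (vec R V).
Notation state := (state V).

Definition occ (y : state) : {set V} := [set v | y v].
Definition occ_state (Y : {set V}) : state := [ffun v => v \in Y].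

Lemma occ_stateK : cancel occ_state occ.
Proof. by move=> Y; apply/setP=> v; rewrite !inE ffunE. Qed.

Lemma occK : cancel occ occ_state.
Proof. by move=> y; apply/ffunP=> v; rewrite ffunE inE. Qed.

(* Basis states are indexed by their sets of occupied sites; an operator that
   maps basis states to basis states or to zero is given by a partial map on
   these sets. *)
Definition ket (Y : {set V}) : vec := mkvec (fun y => (occ y == Y)%:R).
Definition mapop (f : {set V} -> option {set V}) : op :=
  mkop (fun x y => (f (occ y) == Some (occ x))%:R).

Definition ket_idx (Y : {set V}) : 'I_(dimH V) := enum_rank (occ_state Y).

Lemma eq_mkop (f g : state -> state -> C) : f =2 g -> mkop f = mkop g.
Proof. by move=> fg; apply/matrixP=> a b; rewrite !mxE fg. Qed.

Lemma mulmx_ket (M : op) Y a : (M *m ket Y) a 0 = M a (ket_idx Y).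
Proof.
rewrite !mxE (bigD1 (ket_idx Y)) //= big1 ?addr0.
  by rewrite mxE /ket_idx enum_rankK occ_stateK eqxx mulr1.
move=> b nb; rewrite mxE; case: eqP => [E|]; last by rewrite mulr0.
by case/eqP: nb; rewrite /ket_idx -E occK enum_valK.
Qed.

Lemma op_ket_ext (M N : op) : (forall Y, M *m ket Y = N *m ket Y) -> M = N.
Proof.
move=> MN; apply/matrixP=> a b.
have := congr1 (fun v : vec => v a 0) (MN (occ (enum_val b))).
by rewrite /= !mulmx_ket /ket_idx occK enum_valK.
Qed.

Lemma mapop_ket f Y : mapop f *m ket Y = if f Y is Some Z then ket Z else 0.
Proof.
apply/colP=> a; rewrite mulmx_ket /mapop mxE /ket_idx enum_rankK occ_stateK.
case: (f Y) => [Z|]; last by rewrite mxE.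
by rewrite !mxE (inj_eq Some_inj) eq_sym.
Qed.

Lemma mapop_mul f g : mapop f *m mapop g = mapop (fun Y => obind f (g Y)).
Proof.
apply: op_ket_ext=> Y; rewrite -mulmxA !mapop_ket.
by case: (g Y) => [Z|] /=; rewrite ?mapop_ket ?mulmx0.
Qed.

Lemma mapop_Some : mapop Some = 1%:M.
Proof. by apply: op_ket_ext=> Y; rewrite mapop_ket mul1mx. Qed.

Lemma eq_mapop f g : f =1 g -> mapop f = mapop g.
Proof. by move=> fg; apply: eq_mkop=> x y; rewrite fg. Qed.

Definition create (i : V) (Y : {set V}) := if i \in Y then None else Some (i |: Y).
Definition annihilate (i : V) (Y : {set V}) := if i \in Y then Some (Y :\ i) else None.

Lemma sdag_mapop i : sdag R i = mapop (create i).
Proof.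
apply: eq_mkop=> x y; rewrite /create inE; case: (y i) => //=.
rewrite (inj_eq Some_inj).
suff -> : (x == [ffun v => if v == i then true else y v]) = (i |: occ y == occ x).
  by case: (_ == _).
apply/eqP/eqP => [->|E]; first by apply/setP=> v; rewrite !inE ffunE; case: eqP.
by apply: (can_inj occK); rewrite -E; apply/setP=> v; rewrite !inE ffunE; case: eqP.
Qed.

Lemma sop_mapop i : sop R i = mapop (annihilate i).
Proof.
apply/matrixP=> a b; rewrite /sop sdag_mapop !mxE /annihilate.
set x := enum_val a; set y := enum_val b.
have -> : ((create i (occ x) == Some (occ y))%:R : C)^* =
          (create i (occ x) == Some (occ y))%:R.
  by case: (_ == _); rewrite ?conjC1 ?conjC0.
congr (nat_of_bool _)%:R; rewrite /create.
case: (boolP (i \in occ x)) => ix; case: (boolP (i \in occ y)) => iy //=.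
- by apply/esym/eqP => -[E]; move: ix; rewrite -E !inE eqxx.
- by apply/eqP/eqP => -[<-]; congr Some; rewrite ?setU1K ?setD1K.
- by apply/eqP => -[E]; move: iy; rewrite -E !inE eqxx.
Qed.

Definition remove (K Y : {set V}) := if K \subset Y then Some (Y :\: K) else None.
Definition insert (J Z : {set V}) := if J :&: Z == set0 then Some (Z :|: J) else None.
Definition string_map (J K : {set V}) Y := obind (insert J) (remove K Y).

Lemma foldr_sop (t : seq V) : uniq t ->
  foldr mulmx 1%:M (map (@sop R V) t) = mapop (remove [set:: t]).
Proof.
elim: t => [|k t IH] /=.
  by move=> _; rewrite -mapop_Some; apply: eq_mapop=> Y; rewrite /remove set_nil sub0set setD0.
case/andP=> kt ut; rewrite IH // sop_mapop mapop_mul; apply: eq_mapop=> Y.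
rewrite /remove set_cons subUset sub1set.
case: (boolP ([set:: t] \subset Y)) => tY /=; last by rewrite andbF.
rewrite /annihilate andbT !inE kt /=; case: (k \in Y) => //.
by congr Some; apply/setP=> v; rewrite !inE; case: (v == k); rewrite ?andbF ?andbT.
Qed.

Lemma foldr_sdag (s : seq V) (M : op) : uniq s ->
  foldr mulmx M (map (@sdag R V) s) = mapop (insert [set:: s]) *m M.
Proof.
elim: s => [|j s IH] /=.
  move=> _; rewrite (_ : mapop _ = 1%:M) ?mul1mx // -mapop_Some; apply: eq_mapop=> Y.
  by rewrite /insert set_nil set0I eqxx setU0.
case/andP=> js us; rewrite IH // sdag_mapop mulmxA mapop_mul; congr (_ *m _).
apply: eq_mapop=> Y; rewrite /insert set_cons setIUl setU_eq0 (setI_eq0 [set j]) disjoints1.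
case: (boolP ([set:: s] :&: Y == set0)) => sY /=; last by rewrite andbF.
rewrite /create andbT !inE (negbTE js) orbF; case: (j \in Y) => //=.
by congr Some; apply/setP=> v; rewrite !inE; case: (v == j); rewrite ?orbT ?orbF.
Qed.

Lemma nstring_mapop J K : nstring R J K = mapop (string_map J K).
Proof.
rewrite /nstring foldr_cat foldr_sop ?enum_uniq // foldr_sdag ?enum_uniq //.
by rewrite mapop_mul !set_enum.
Qed.

End BasisOperators.

Section Amplitudes.
Variables (R : realType) (V : finType).
Notation C := (R[i]).
Notation op := (op R V).
Notation vec := (vec R V).
Notation ket := (ket R).
Implicit Types (J K S Y : {set V}) (i k : V).

Lemma set1_neq0 (i : V) : [set i] != set0.
Proof. by apply/set0Pn; exists i; rewrite set11. Qed.

Lemma string_map0 J K : string_map J K set0 = if K == set0 then Some J else None.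
Proof.
rewrite /string_map /remove subset0; case: (K == set0) => //=.
by rewrite /insert set0D setI0 eqxx set0U.
Qed.

Lemma string_map1 J K i : string_map J K [set i] =
  if K == set0 then (if i \in J then None else Some (i |: J))
  else if K == [set i] then Some J else None.
Proof.
rewrite /string_map /remove subset1; case: (eqVneq K set0) => [->|K0].
  rewrite orbT /= setD0 /insert setIC (setI_eq0 [set i]) disjoints1.
  by case: (i \in J); rewrite // setUC.
by case: eqP => //= ->; rewrite setDv /insert setI0 eqxx set0U.
Qed.

Lemma string_map1_eq J K i S :
  ((string_map J K [set i] == Some S)%:R : C) =
  ((i \in S) && (J == S :\ i) && (K == set0))%:R + ((J == S) && (K == [set i]))%:R.
Proof.
rewrite string_map1; case: (eqVneq K set0) => [->|K0].
  rewrite (eq_sym set0) (negbTE (set1_neq0 i)) andbF addr0 andbT.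
  case: (boolP (i \in J)) => iJ.
    by case: (eqVneq J (S :\ i)) iJ => [->|]; rewrite ?andbF // !inE eqxx.
  congr (nat_of_bool _)%:R; rewrite (inj_eq Some_inj).
  apply/eqP/andP => [<-|[iS /eqP ->]]; last by rewrite setD1K.
  by rewrite setU1K // setU11.
rewrite andbF add0r; case: (K == [set i]); last by rewrite andbF.
by rewrite andbT (inj_eq Some_inj).
Qed.

Definition amp (v : vec) (S : {set V}) : C := v (ket_idx S) 0.

Lemma amp_ket Y S : amp (ket Y) S = (S == Y)%:R.
Proof. by rewrite /amp /ket mxE /ket_idx enum_rankK occ_stateK. Qed.

Lemma amp_opt_ket (o : option {set V}) S :
  amp (if o is Some Z then ket Z else 0) S = (o == Some S)%:R.
Proof.
case: o => [Z|]; last by rewrite /amp mxE.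
by rewrite amp_ket (inj_eq Some_inj) eq_sym.
Qed.

Lemma ampZ a v S : amp (a *: v) S = a * amp v S.
Proof. by rewrite /amp mxE. Qed.

Lemma amp_sum (I : finType) (P : pred I) (F : I -> vec) S :
  amp (\sum_(i | P i) F i) S = \sum_(i | P i) amp (F i) S.
Proof. by rewrite /amp summxE. Qed.

Lemma vac_ket : vac R V = ket set0.
Proof.
apply/colP=> a; rewrite !mxE; congr (nat_of_bool _)%:R.
apply/eqP/eqP => [->|E]; first by apply/setP=> v; rewrite !inE ffunE.
by rewrite -[enum_val a]occK E; apply/ffunP=> v; rewrite !ffunE inE.
Qed.

Lemma sum_eq_set1 (A : {set V}) : \sum_i ((A == [set i])%:R : C) = (#|A| == 1%N)%:R.
Proof.
case: (boolP (#|A| == 1%N)) => [/cards1P [x ->]|A1].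
  rewrite (bigD1 x) //= eqxx big1 ?addr0 // => i ix.
  by rewrite (inj_eq set1_inj) eq_sym (negbTE ix).
by apply: big1 => i _; case: eqP => // E; move: A1; rewrite E cards1.
Qed.

Definition wnorm : C := (sqrtC #|V|%:R)^-1.

Lemma Wst_ket : Wst R V = wnorm *: \sum_i ket [set i].
Proof.
apply/colP=> a; rewrite !mxE summxE; under eq_bigr do rewrite mxE.
by rewrite sum_eq_set1 /wnorm; case: (_ == _); rewrite ?mulr1 ?mulr0.
Qed.

Lemma nstring_Wst J K : nstring R J K *m Wst R V =
  wnorm *: \sum_i (if string_map J K [set i] is Some Z then ket Z else 0).
Proof.
rewrite Wst_ket -scalemxAr mulmx_sumr; congr (_ *: _).
by apply: eq_bigr => i _; rewrite nstring_mapop mapop_ket.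
Qed.

Lemma nstring_vac J K : K != set0 -> nstring R J K *m vac R V = 0.
Proof. by move=> K0; rewrite vac_ket nstring_mapop mapop_ket string_map0 (negbTE K0). Qed.

Lemma nstring1_Wst J k : nstring R J [set k] *m Wst R V = wnorm *: ket J.
Proof.
rewrite nstring_Wst (bigD1 k) //= string_map1 (negbTE (set1_neq0 k)) eqxx.
rewrite big1 ?addr0 // => i ik; rewrite string_map1 (negbTE (set1_neq0 k)).
by rewrite (inj_eq set1_inj) eq_sym (negbTE ik).
Qed.

End Amplitudes.

Section Support.
Variables (R : realType) (V : finType).
Notation C := (R[i]).
Notation state := (state V).
Implicit Types (J K X Y : {set V}).

Definition extend (X : {set V}) (a : local X) : state :=
  [ffun v => if insub v is Some u then a u else false].

Lemma occ_extend_restr X (y : state) : occ (extend (restr X y)) = occ y :&: X.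
Proof.
apply/setP=> v; rewrite !inE ffunE; case: insubP => [u uX <-|/negbTE ->].
  by rewrite ffunE (valP u) andbT.
by rewrite andbF.
Qed.

Lemma prod_nat_eq (X : {set V}) (x y : state) :
  \prod_(v in ~: X) ((x v == y v)%:R : C) = [forall v in ~: X, x v == y v]%:R.
Proof.
case: (boolP [forall v in ~: X, x v == y v]) => [/forall_inP xy|/forall_inPn [v vX nxy]].
  by rewrite big1 // => v /xy /eqP ->; rewrite eqxx.
by rewrite (bigD1 v) //= (negbTE nxy) mul0r.
Qed.

(* [f] acts inside [X] and leaves the occupation outside [X] unchanged. *)
Lemma mapop_supported X f :
  (forall Y, f Y = omap (fun Z => Z :|: (Y :\: X)) (f (Y :&: X))) ->
  (forall Y Z, f (Y :&: X) = Some Z -> Z \subset X) ->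
  supported X (mapop R f).
Proof.
move=> floc fsub; exists (fun a b => (f (occ (extend b)) == Some (occ (extend a)))%:R).
apply: eq_mkop=> x y; rewrite !occ_extend_restr prod_nat_eq.
suff -> : (f (occ y) == Some (occ x)) =
   (f (occ y :&: X) == Some (occ x :&: X)) && [forall v in ~: X, x v == y v].
  by case: (_ == _); case: [forall _ in _, _]; rewrite ?mulr1 ?mulr0.
rewrite floc; case E: (f (occ y :&: X)) => [Z|] //=.
have ZnX v : v \notin X -> (v \in Z) = false.
  by move=> vX; apply/negbTE; apply: contra vX; apply/subsetP/(fsub _ _ E).
rewrite !(inj_eq Some_inj); apply/eqP/andP => [E2|[/eqP ZE /forallP xy]].
  split.
    rewrite -E2; apply/eqP/setP=> v; rewrite !inE.
    by case: (boolP (v \in X)) => vX /=; [rewrite orbF andbT | rewrite andbF ZnX].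
  apply/forallP=> v; apply/implyP; rewrite !inE => vX.
  have : (v \in occ x) = (v \in occ y) by rewrite -E2 !inE vX ZnX.
  by rewrite !inE => ->.
apply/setP=> v; rewrite ZE !inE; case: (boolP (v \in X)) => vX /=; first by rewrite andbT orbF.
by have := xy v; rewrite !inE vX andbF => /eqP ->.
Qed.

Lemma nstring_supported (X J K : {set V}) :
  J :|: K \subset X -> supported X (nstring R J K).
Proof.
rewrite subUset => /andP [/subsetP jx /subsetP kx]; rewrite nstring_mapop.
apply: mapop_supported => [Y|Y Z].
  rewrite /string_map /remove subsetI (introT subsetP kx) andbT.
  case: (K \subset Y) => //=; rewrite /insert.
  have -> : J :&: (Y :&: X :\: K) = J :&: (Y :\: K).
    by apply/setP=> v; rewrite !inE; case: (boolP (v \in J)) => // /jx ->; rewrite andbT.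
  case: (_ == set0) => //=; congr Some; apply/setP=> v; rewrite !inE.
  case: (boolP (v \in J)) => vJ; rewrite ?orbT //= ?orbF.
  by case: (boolP (v \in K)) => [/kx ->|_]; case: (v \in X); case: (v \in Y).
rewrite /string_map /remove; case: (K \subset _) => //=.
rewrite /insert; case: (_ == set0) => //= -[<-].
by apply/subsetP=> v; rewrite !inE => /orP [/andP [_ /andP [_ ->]] //|/jx].
Qed.

End Support.

Section EigenEquation.
Variables (R : realType) (V : finType).
Notation C := (R[i]).
Notation op := (op R V).
Implicit Types (J K S : {set V}).
Variables (c : {set V} -> {set V} -> C) (lam : C).

Definition expansion : op := \sum_J \sum_K c J K *: nstring R J K.

Lemma sum_delta2 J0 K0 : \sum_J \sum_K c J K * ((J == J0) && (K == K0))%:R = c J0 K0.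
Proof.
rewrite (bigD1 J0) //= [X in _ + X]big1 ?addr0; last first.
  by move=> J /negbTE JJ; apply: big1 => K _; rewrite JJ mulr0.
rewrite (bigD1 K0) //= !eqxx mulr1 [X in _ + X]big1 ?addr0 //.
by move=> K /negbTE ->; rewrite mulr0.
Qed.

Lemma amp_nstring_Wst J K S : amp (nstring R J K *m Wst R V) S =
  wnorm R V * \sum_i (string_map J K [set i] == Some S)%:R.
Proof.
rewrite nstring_Wst ampZ amp_sum; congr (_ * _).
by apply: eq_bigr => i _; rewrite amp_opt_ket.
Qed.

(* Only the terms [s_J^dag] with [|S \ J| = 1] and [s_S^dag s_i] map a
   one-particle state into the basis state [S]. *)
Lemma amp_expansion_Wst S : amp (expansion *m Wst R V) S =
  wnorm R V * (\sum_(i in S) c (S :\ i) set0 + \sum_i c S [set i]).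
Proof.
transitivity (wnorm R V * \sum_i \sum_J \sum_K
                c J K * (string_map J K [set i] == Some S)%:R).
  rewrite exchange_big big_distrr mulmx_suml amp_sum; apply: eq_bigr => J _.
  rewrite exchange_big big_distrr mulmx_suml amp_sum; apply: eq_bigr => K _.
  by rewrite -scalemxAl ampZ amp_nstring_Wst mulrCA big_distrr.
congr (_ * _); rewrite [in RHS]big_mkcond -big_split; apply: eq_bigr => i _ /=.
under eq_bigr do under eq_bigr do rewrite string_map1_eq mulrDr.
rewrite (eq_bigr _ (fun J _ => big_split _ _ _ _ _)) big_split /= sum_delta2.
case: (i \in S) => /=; first by rewrite sum_delta2.
by rewrite big1 // => J _; rewrite big1 // => K _; rewrite mulr0.
Qed.

Hypothesis V_gt0 : (0 < #|V|)%N.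
Hypothesis H_eig : expansion *m Wst R V = lam *: Wst R V.

Lemma coeff_eigen_eq S :
  \sum_(i in S) c (S :\ i) set0 + \sum_i c S [set i] = lam * (#|S| == 1%N)%:R.
Proof.
have wnorm_neq0 : wnorm R V != 0 by rewrite invr_eq0 sqrtC_eq0 pnatr_eq0 -lt0n.
apply: (mulfI wnorm_neq0); rewrite -amp_expansion_Wst H_eig mulrCA Wst_ket !ampZ amp_sum.
by congr (_ * (_ * _)); rewrite -sum_eq_set1; apply: eq_bigr => i _; rewrite amp_ket.
Qed.

End EigenEquation.

Section Decomposable.
Variables (R : realType) (V : finType) (e : rel V) (Rr : nat).
Notation C := (R[i]).
Notation op := (op R V).

Lemma supported0 (X : {set V}) : supported X (0 : op).
Proof. by exists (fun _ _ => 0); apply/matrixP=> a b; rewrite !mxE mul0r. Qed.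

Lemma supportedD (X : {set V}) (M N : op) :
  supported X M -> supported X N -> supported X (M + N).
Proof.
case=> A ->; case=> B ->; exists (fun a b => A a b + B a b).
by apply/matrixP=> a b; rewrite !mxE mulrDl.
Qed.

Lemma supportedZ (X : {set V}) (k : C) (M : op) :
  supported X M -> supported X (k *: M).
Proof.
case=> A ->; exists (fun a b => k * A a b).
by apply/matrixP=> a b; rewrite !mxE mulrA.
Qed.

Lemma supportedB (X : {set V}) (M N : op) :
  supported X M -> supported X N -> supported X (M - N).
Proof. by move=> sM sN; rewrite -scaleN1r; apply: supportedD sM (supportedZ _ sN). Qed.

Definition decomposable (M : op) := exists h : {set V} -> op,
  (forall X : {set V}, (diam e X <= 2 * Rr)%N ->
     supported X (h X) /\ h X *m Wst R V = 0 /\ h X *m vac R V = 0) /\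
  M = \sum_(X : {set V} | (diam e X <= 2 * Rr)%N) h X.

Lemma decomposable0 : decomposable 0.
Proof.
exists (fun _ => 0); split; last by rewrite big1.
by move=> X _; rewrite !mul0mx; split=> //; exact: supported0.
Qed.

Lemma decomposableD M N : decomposable M -> decomposable N -> decomposable (M + N).
Proof.
case=> h1 [H1 ->]; case=> h2 [H2 ->]; exists (fun X => h1 X + h2 X); split.
  move=> X hX; have [s1 [w1 v1]] := H1 X hX; have [s2 [w2 v2]] := H2 X hX.
  by rewrite !mulmxDl w1 w2 v1 v2 !addr0; split=> //; exact: supportedD.
by rewrite big_split.
Qed.

Lemma decomposableZ k M : decomposable M -> decomposable (k *: M).
Proof.
case=> h [H1 ->]; exists (fun X => k *: h X); split; last by rewrite scaler_sumr.
move=> X hX; have [s1 [w1 v1]] := H1 X hX.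
by rewrite -!scalemxAl w1 v1 !scaler0; split=> //; exact: supportedZ.
Qed.

Lemma decomposable_sum (I : finType) (P : pred I) (F : I -> op) :
  (forall i, P i -> decomposable (F i)) -> decomposable (\sum_(i | P i) F i).
Proof.
move=> H; elim/big_rec: _ => [|i M Pi DM]; first exact: decomposable0.
exact: decomposableD (H i Pi) DM.
Qed.

Lemma decomposable_local (X : {set V}) M : supported X M -> (diam e X <= 2 * Rr)%N ->
  M *m Wst R V = 0 -> M *m vac R V = 0 -> decomposable M.
Proof.
move=> sM dX wM vM; exists (fun Y => if Y == X then M else 0); split.
  move=> Y _; case: eqP => [->|_] //.
  by rewrite !mul0mx; split=> //; exact: supported0.
by rewrite (bigD1 X) //= eqxx big1 ?addr0 // => Y /andP [_ /negbTE ->].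
Qed.

End Decomposable.

Lemma double_expS_le d m : (1 < d)%N -> (2 * d.+1 ^ m <= d ^ (2 * m).+1)%N.
Proof.
move=> d_gt1; rewrite expnS expnM; apply: leq_mul => //.
by elim: m => // m IH; rewrite !(expnS _ m); apply: leq_mul _ IH; rewrite -mulnn; nia.
Qed.

Lemma sum_set_by_card (V : finType) (T : nmodType) (f : {set V} -> T) :
  \sum_(K : {set V}) f K =
  f set0 + \sum_i f [set i] + \sum_(K : {set V} | (1 < #|K|)%N) f K.
Proof.
rewrite (bigID (fun K : {set V} => (1 < #|K|)%N)) /= addrC (bigD1 set0) ?cards0 //=.
congr (_ + _ + _); rewrite -(big_imset _ (in2W set1_inj)) /=.
apply: eq_bigl => K; rewrite -leqNgt -cards_eq0; apply/andP/imsetP => [[K1 K0]|[i _ ->]].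
  have /cards1P [i ->] : #|K| == 1%N by lia.
  by exists i.
by rewrite cards1.
Qed.

Section Proposition4.
Variables (R : realType) (V : finType) (e : rel V).
Notation C := (R[i]).
Notation op := (op R V).
Hypotheses (e_sym : symmetric e) (e_conn : forall i j : V, connect e i j).
Variable Rr : nat.
Hypotheses (Rr_pos : (0 < Rr)%N) (HN : (maxdeg e ^ (4 * Rr) + 1 < #|V|)%N).
Implicit Types (J K : {set V}).
Variables (c : {set V} -> {set V} -> C) (lam : C).
Hypothesis c_range : forall J K, c J K != 0 -> (srange e (J :|: K) <= Rr)%N.
Hypothesis H_eig : expansion c *m Wst R V = lam *: Wst R V.

(* Sites [u], [v] with [~~ near u v] never appear together in a string of H. *)
Local Notation near := (reach e Rr.-1).

Lemma maxdeg_gt1 : (1 < maxdeg e)%N.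
Proof.
rewrite ltnNge; apply/negP => D1; move: HN; apply/negP; rewrite -leqNgt.
apply: leq_trans (card_le_maxdegS e_sym e_conn D1) _.
by case: (maxdeg e) D1 => [|[|]] // _; rewrite ?exp1n addn1.
Qed.

Lemma card_gt0 : (0 < #|V|)%N.
Proof. exact: leq_ltn_trans HN. Qed.

Lemma Rr_lt_card : (Rr.-1 < #|V|)%N.
Proof.
have := ltn_expl (4 * Rr) (isT : (1 < 2)%N).
have : (2 ^ (4 * Rr) <= maxdeg e ^ (4 * Rr))%N.
  by rewrite leq_exp2r ?muln_gt0 ?Rr_pos // maxdeg_gt1.
by move: HN; lia.
Qed.

Lemma far_from_pair m a b : (m <= (2 * Rr).-1)%N ->
  exists d, ~~ reach e m a d /\ ~~ reach e m b d.
Proof.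
move=> hm; have far_bound : (2 * (maxdeg e).+1 ^ (2 * Rr).-1 < #|V|)%N.
  apply: leq_ltn_trans (double_expS_le _ maxdeg_gt1) (leq_ltn_trans _ HN).
  apply: leq_trans (leq_addr 1 _); apply: leq_pexp2l; [exact: ltnW maxdeg_gt1 | lia].
have [d [ad bd]] := exists_far far_bound a b.
by exists d; split; [move: ad | move: bd]; apply: contra; exact: reach_le.
Qed.

Lemma coeff_far_eq0 J K u v :
  u \in J :|: K -> v \in J :|: K -> ~~ near u v -> c J K = 0.
Proof.
move=> uS vS; apply: contraNeq => /c_range hS.
by apply: reach_srange Rr_lt_card uS vS; rewrite prednK.
Qed.

Lemma coeff_create_pair u v : ~~ near u v -> c [set u] set0 + c [set v] set0 = 0.
Proof.
move=> nuv; have uv : u != v by apply: contra nuv => /eqP ->; exact: reach0.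
have := coeff_eigen_eq card_gt0 H_eig [set u; v].
rewrite cards2 uv mulr0 [X in _ + X]big1 ?addr0; last first.
  by move=> i _; apply: (coeff_far_eq0 (u := u) (v := v)) nuv; rewrite !inE eqxx ?orbT.
rewrite big_setU1 ?inE //= big_set1 setU1K ?inE // addrC.
suff -> : [set u; v] :\ v = [set u] by [].
apply/setP=> w; rewrite !inE.
by case: (eqVneq w v) => [->|wv] /=; rewrite ?orbF // eq_sym (negbTE uv).
Qed.

(* Three pairwise far sites [a], [b], [d] give [c_a = - c_b = c_d = - c_a]. *)
Lemma coeff_create1_eq0 a : c [set a] set0 = 0.
Proof.
have [b [ab _]] := far_from_pair a a (leqnn _).
have [d [ad bd]] := far_from_pair a b (leqnn _).
have far_near x y : ~~ reach e (2 * Rr).-1 x y -> ~~ near x y.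
  by apply: contra; apply: reach_le; lia.
have opp_a x : ~~ near a x -> c [set x] set0 = - c [set a] set0.
  by move=> nax; apply/eqP; rewrite -addr_eq0 addrC coeff_create_pair.
have := coeff_create_pair (far_near _ _ bd).
rewrite (opp_a b (far_near _ _ ab)) (opp_a d (far_near _ _ ad)) -opprD.
by move/eqP; rewrite oppr_eq0 -mulr2n mulrn_eq0 /= => /eqP.
Qed.

(* A site [b] far from [J] shares no string of H with any site of [J], so the
   eigenvalue equation at [b |: J] reduces to [c J set0 = 0]. *)
Lemma coeff_create_gt1_eq0 J : (1 < #|J|)%N -> c J set0 = 0.
Proof.
move=> J2; have [//|cJ] := eqVneq (c J set0) 0.
have J_range : (srange e J <= Rr.-1.+1)%N.
  by rewrite prednK //; have := c_range cJ; rewrite setU0.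
have nearJ u v : u \in J -> v \in J -> near u v := reach_srange J_range Rr_lt_card.
have [a aJ] : exists a, a \in J by apply/set0Pn; rewrite -cards_eq0; lia.
have [b [ab _]] := far_from_pair a a (leqnn _).
have farJ j : j \in J -> ~~ near j b.
  move=> jJ; apply: contra ab => jb.
  by apply: reach_le (reach_trans (nearJ _ _ aJ jJ) jb); lia.
have bJ : b \notin J by apply: contra ab => bJ; apply: reach_le (nearJ _ _ aJ bJ); lia.
have := coeff_eigen_eq card_gt0 H_eig (b |: J).
rewrite cardsU1 bJ /= (_ : (1 + #|J| == 1)%N = false) ?mulr0; last by lia.
rewrite [X in _ + X]big1 ?addr0; last first.
  move=> i _; apply: (coeff_far_eq0 (u := a) (v := b)) (farJ _ aJ).
    by rewrite !inE aJ orbT.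
  by rewrite !inE eqxx.
rewrite big_setU1 //= setU1K // big1 ?addr0 // => i iJ.
have [j] : exists j, j \in J :\ i.
  by apply/set0Pn; rewrite -cards_eq0; move: J2; rewrite (cardsD1 i J) iJ; lia.
rewrite !inE => /andP [ji jJ]; apply: (coeff_far_eq0 (u := j) (v := b)) (farJ _ jJ).
  by rewrite !inE ji jJ orbT.
by rewrite !inE eqxx /= andbT orbF; apply: contraNneq _ bJ => ->.
Qed.

Lemma coeff_create_eq0 J : J != set0 -> c J set0 = 0.
Proof.
rewrite -cards_eq0 => J0; case: (boolP (#|J| == 1%N)) => [/cards1P [a ->]|J1].
  exact: coeff_create1_eq0.
by apply: coeff_create_gt1_eq0; lia.
Qed.

Definition hop_amplitude := lam - c set0 set0.

Lemma sum_coeff_hop J : \sum_i c J [set i] = hop_amplitude * (#|J| == 1%N)%:R.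
Proof.
have := coeff_eigen_eq card_gt0 H_eig J.
case: (boolP (#|J| == 1%N)) => [/cards1P [a ->]|J1].
  by rewrite /hop_amplitude big_set1 setDv !mulr1 => <-; rewrite addrAC subrr add0r.
rewrite !mulr0 big1 ?add0r // => i iJ; apply: coeff_create_eq0.
by rewrite -cards_eq0; move: J1; rewrite (cardsD1 i J) iJ; lia.
Qed.

Lemma decomposable_string_gt1 J K : (1 < #|K|)%N ->
  decomposable e Rr (c J K *: nstring R J K).
Proof.
move=> K2; have [->|cJK] := eqVneq (c J K) 0; first by rewrite scale0r; exact: decomposable0.
have K0 : K != set0 by rewrite -cards_eq0; lia.
apply: (decomposable_local (X := J :|: K)).
- exact/supportedZ/nstring_supported.
- by apply: leq_trans (c_range cJK) _; lia.
- rewrite -scalemxAl nstring_Wst big1 ?scaler0 // => i _.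
  by rewrite string_map1 (negbTE K0); case: eqP => // K1; move: K2; rewrite K1 cards1.
- by rewrite -scalemxAl nstring_vac ?scaler0.
Qed.

Lemma decomposable_hop_diff J k a : a \in J ->
  decomposable e Rr (c J [set k] *: (nstring R J [set k] - nstring R J [set a])).
Proof.
move=> aJ; have [->|cJk] := eqVneq (c J [set k]) 0.
  by rewrite scale0r; exact: decomposable0.
apply: (decomposable_local (X := J :|: [set k])).
- apply/supportedZ/supportedB; apply: nstring_supported => //.
  by rewrite subUset subsetUl sub1set inE aJ.
- by apply: leq_trans (c_range cJk) _; lia.
- by rewrite -scalemxAl mulmxBl !nstring1_Wst subrr scaler0.
- by rewrite -scalemxAl mulmxBl !nstring_vac ?subrr ?scaler0 ?set1_neq0.
Qed.

Lemma decomposable_hop_edge u v : e u v ->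
  decomposable e Rr (nstring R set0 [set v] - nstring R set0 [set u]).
Proof.
move=> euv; apply: (decomposable_local (X := [set u; v])).
- by apply: supportedB; apply: nstring_supported; rewrite set0U ?subsetUr // sub1set !inE eqxx.
- apply: leq_trans (diam_le_reach (n := 1) _) _; last by lia.
  move=> x y; rewrite !inE => /orP [] /eqP -> /orP [] /eqP ->; rewrite ?reach0 //.
    exact: reach_edge.
  by apply: reach_edge; rewrite e_sym.
- by rewrite mulmxBl !nstring1_Wst subrr.
- by rewrite mulmxBl !nstring_vac ?subrr ?set1_neq0.
Qed.

Lemma decomposable_hop_path r n v : reach e n r v ->
  decomposable e Rr (nstring R set0 [set v] - nstring R set0 [set r]).
Proof.
elim: n v => [|n IH] v /=; first by move/eqP=> ->; rewrite subrr; exact: decomposable0.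
case/orP => [/IH //|/existsP [k /andP [rk ekv]]].
rewrite -(subrK (nstring R set0 [set k]) (nstring R set0 [set v])) -addrA.
exact: decomposableD (decomposable_hop_edge ekv) (IH _ rk).
Qed.

Lemma expansion_by_card : expansion c =
  \sum_(J : {set V}) c J set0 *: nstring R J set0 +
  \sum_(J : {set V}) \sum_i c J [set i] *: nstring R J [set i] +
  \sum_(J : {set V}) \sum_(K : {set V} | (1 < #|K|)%N) c J K *: nstring R J K.
Proof. by rewrite -!big_split; apply: eq_bigr => J _; rewrite sum_set_by_card. Qed.

Lemma sum_create_strings : \sum_(J : {set V}) c J set0 *: nstring R J set0 = (c set0 set0)%:M.
Proof.
rewrite (bigD1 set0) //= big1 ?addr0; first by rewrite /nstring enum_set0 scalemx1.
by move=> J J0; rewrite coeff_create_eq0 // scale0r.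
Qed.

(* Each hop term [s_J^dag s_i] is compared with the hop onto a fixed site of
   [J]; the coefficients of the latter sum to [hop_amplitude] on singletons and
   to 0 elsewhere. *)
Definition anchor (r : V) (J : {set V}) := odflt r [pick x in J].

Lemma anchor_in r J : J != set0 -> anchor r J \in J.
Proof. by case/set0Pn=> x xJ; rewrite /anchor; case: pickP => [//|/(_ x)]; rewrite xJ. Qed.

Lemma anchor1 r a : anchor r [set a] = a.
Proof. by apply/set1P/anchor_in/set1_neq0. Qed.

Lemma anchor0 r : anchor r set0 = r.
Proof. by rewrite /anchor; case: pickP => // x; rewrite inE. Qed.

Lemma sum_hop_strings (r : V) : \sum_(J : {set V}) \sum_i c J [set i] *: nstring R J [set i] =
  \sum_(J : {set V}) \sum_i
    c J [set i] *: (nstring R J [set i] - nstring R J [set anchor r J]) +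
  hop_amplitude *: numop R V.
Proof.
have hop_J J : \sum_i c J [set i] *: nstring R J [set i] =
    \sum_i c J [set i] *: (nstring R J [set i] - nstring R J [set anchor r J]) +
    (hop_amplitude * (#|J| == 1%N)%:R) *: nstring R J [set anchor r J].
  rewrite -sum_coeff_hop scaler_suml -big_split; apply: eq_bigr => i _ /=.
  by rewrite scalerBr subrK.
rewrite (eq_bigr _ (fun J _ => hop_J J)) big_split /=; congr (_ + _).
rewrite /numop scaler_sumr; transitivity (\sum_(J : {set V}) \sum_a
    ((J == [set a])%:R * hop_amplitude) *: nstring R J [set anchor r J]).
  by apply: eq_bigr => J _; rewrite -scaler_suml -big_distrl /= sum_eq_set1 mulrC.
rewrite exchange_big /=; apply: eq_bigr => a _.
rewrite (bigD1 [set a]) //= eqxx mul1r anchor1 big1 ?addr0; last first.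
  by move=> J /negbTE ->; rewrite mul0r scale0r.
by rewrite /nstring enum_set1 /= mulmx1.
Qed.

Definition local_remainder (r : V) : op :=
  \sum_(J : {set V}) \sum_i
    c J [set i] *: (nstring R J [set i] - nstring R J [set anchor r J]) +
  \sum_(J : {set V}) \sum_(K : {set V} | (1 < #|K|)%N) c J K *: nstring R J K.

Lemma expansion_eq r :
  expansion c = (c set0 set0)%:M + hop_amplitude *: numop R V + local_remainder r.
Proof.
rewrite expansion_by_card sum_create_strings (sum_hop_strings r).
by rewrite [X in _ + X + _]addrC !addrA.
Qed.

Lemma decomposable_local_remainder r : decomposable e Rr (local_remainder r).
Proof.
apply: decomposableD; last first.
  apply: decomposable_sum => J _; apply: decomposable_sum => K.
  exact: decomposable_string_gt1.
apply: decomposable_sum => J _; apply: decomposable_sum => i _.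
have [->|J0] := eqVneq J set0; last exact/decomposable_hop_diff/anchor_in.
apply: decomposableZ; rewrite anchor0; have [n] := connect_reach (e_conn r i).
exact: decomposable_hop_path.
Qed.

End Proposition4.

Theorem proposition4 (R : realType) (V : finType) (e : rel V)
    (e_sym : symmetric e) (e_irr : irreflexive e)
    (e_conn : forall i j : V, connect e i j)
    (Rr : nat) (Rr_pos : (0 < Rr)%N)
    (HN : (maxdeg e ^ (4 * Rr) + 1 < #|V|)%N)
    (H : op R V) (H_range : range_le e Rr H)
    (lam : R[i]) (H_eig : H *m Wst R V = lam *: Wst R V) :
  exists (Om om : R[i]) (h : {set V} -> op R V),
    (forall X : {set V}, (diam e X <= 2 * Rr)%N ->
       supported X (h X) /\ h X *m Wst R V = 0 /\ h X *m vac R V = 0) /\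
    H = Om%:M + om *: numop R V + \sum_(X : {set V} | (diam e X <= 2 * Rr)%N) h X.
Proof.
have [c [Hc c_range]] := H_range; subst H.
have [r _] := card_gt0P (card_gt0 HN).
have [h [hP hE]] := decomposable_local_remainder e_sym e_conn Rr_pos HN c_range r.
exists (c set0 set0), (hop_amplitude c lam), h; split=> //.
by rewrite -hE -(expansion_eq e_sym e_conn Rr_pos HN c_range H_eig r).
Qed.
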